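(* Let $\mathbf{H}_1,\mathbf{H}_2$ be complex Hilbert spaces with $\mathbf{H}_1$ separable, $H=\mathbf{H}_1\otimes\mathbf{H}_2$, $\mathcal{A}:H\to H$ bounded linear and $\varphi\in H$. Let $y_1,\dots,y_n\in\mathbf{H}_2$ with $\langle y_i,y_j\rangle_2=\delta_{ij}$, and let $k_1,\dots,k_n\in\mathbf{H}_2$ be linearly independent with $\langle k_i,y_j\rangle_2=\delta_{ij}$. Let $\eta_1,\dots,\eta_n\in\mathbf{H}_2$ with $\|\eta_i\|=1$ and $\langle\eta_i,y_j\rangle_2=0$ for all $i,j$, let $\varepsilon\in\mathbb{R}$, and set $k'_i=k_i+\varepsilon\eta_i$. Assume $$\|\mathcal{A}\mathcal{P}_k\|+\|\varepsilon\,\mathcal{A}\tilde{\mathcal{P}}_\eta\|<1\qquad\text{and}\qquad\tilde{\mathcal{P}}_k\sum_{i=0}^{\infty}(\mathcal{A}\mathcal{P}_k)^i\varphi=0.$$ Then $\sum_{i=0}^\infty(\mathcal{A}\mathcal{P}_{k'})^i\varphi$ converges and $\tilde{\mathcal{P}}_{k'}\sum_{i=0}^{\infty}(\mathcal{A}\mathcal{P}_{k'})^i\varphi=0$.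
   Context: $H=\mathbf{H}_1\otimes\mathbf{H}_2$ is the Hilbert tensor product with inner product $\langle\cdot,\cdot\rangle$; $\langle\cdot,\cdot\rangle_1,\langle\cdot,\cdot\rangle_2$ are the inner products of $\mathbf{H}_1,\mathbf{H}_2$ (linear in the first argument). The partial inner product $\langle\cdot,\cdot\rangle_{2'}:H\times\mathbf{H}_2\to\mathbf{H}_1$ is determined by $\langle\langle x,y\rangle_{2'},z\rangle_1=\langle x,z\otimes y\rangle$ for all $x\in H$, $y\in\mathbf{H}_2$, $z\in\mathbf{H}_1$. For $u_1,\dots,u_n\in\mathbf{H}_2$: $\mathcal{P}_u x=x-\sum_{i=1}^n\langle x,y_i\rangle_{2'}\otimes u_i$ and $\tilde{\mathcal{P}}_u x=\sum_{i=1}^n\langle x,y_i\rangle_{2'}\otimes u_i$. $\|\cdot\|$ is the operator norm. *)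

From HB Require Import structures.
From mathcomp Require Import all_boot all_order all_algebra.
From mathcomp Require Import complex.
From mathcomp Require Import classical_sets reals.
Set Implicit Arguments. Unset Strict Implicit. Unset Printing Implicit Defensive.
Import Order.TTheory GRing.Theory Num.Theory.
Local Open Scope ring_scope.
Local Open Scope classical_set_scope.

Section Hilbert.
Variable R : realType.
Local Notation C := R[i].

Definition inner_product (V : lmodType C) (ip : V -> V -> C) : Prop :=
  [/\ (forall (a : C) (x y z : V), ip (a *: x + y) z = a * ip x z + ip y z),
      (forall x y : V, ip y x = (ip x y)^*),
      (forall x : V, 0 <= ip x x) &
      (forall x : V, ip x x = 0 -> x = 0)].

Definition hnorm (V : lmodType C) (ip : V -> V -> C) (x : V) : R :=
  Num.sqrt (complex.Re (ip x x)).

Definition hconverges_to (V : lmodType C) (ip : V -> V -> C)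
    (u : nat -> V) (l : V) : Prop :=
  forall e : R, 0 < e -> exists N : nat, forall n : nat, (N <= n)%N ->
    hnorm ip (u n - l) < e.

Definition hcauchy (V : lmodType C) (ip : V -> V -> C) (u : nat -> V) : Prop :=
  forall e : R, 0 < e -> exists N : nat, forall m n : nat, (N <= m)%N -> (N <= n)%N ->
    hnorm ip (u m - u n) < e.

Definition hilbert (V : lmodType C) (ip : V -> V -> C) : Prop :=
  inner_product ip /\
  (forall u : nat -> V, hcauchy ip u -> exists l, hconverges_to ip u l).

Definition separable (V : lmodType C) (ip : V -> V -> C) : Prop :=
  exists d : nat -> V, forall (x : V) (e : R), 0 < e ->
    exists n : nat, hnorm ip (x - d n) < e.

(* (H, ip, t) is the Hilbert tensor product of (H1, ip1) and (H2, ip2) with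
   t a b = a (x) b: t is bilinear, <a(x)b, c(x)d> = <a,c>_1 <b,d>_2, and the
   linear span of the elementary tensors is dense in H. *)
Definition hilbert_tensor (H1 H2 H : lmodType C)
    (ip1 : H1 -> H1 -> C) (ip2 : H2 -> H2 -> C) (ip : H -> H -> C)
    (t : H1 -> H2 -> H) : Prop :=
  [/\ hilbert ip,
      (forall (c : C) (a a' : H1) (b : H2), t (c *: a + a') b = c *: t a b + t a' b),
      (forall (c : C) (a : H1) (b b' : H2), t a (c *: b + b') = c *: t a b + t a b'),
      (forall (a c : H1) (b d : H2), ip (t a b) (t c d) = ip1 a c * ip2 b d) &
      (forall (x : H) (e : R), 0 < e -> exists (m : nat) (a : 'I_m -> H1) (b : 'I_m -> H2),
          hnorm ip (x - \sum_(j < m) t (a j) (b j)) < e)].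

(* the partial inner product <.,.>_{2'} : H x H2 -> H1, determined by
   <<x,y>_{2'}, z>_1 = <x, z (x) y> *)
Definition partial_inner (H1 H2 H : lmodType C)
    (ip1 : H1 -> H1 -> C) (ip : H -> H -> C) (t : H1 -> H2 -> H)
    (pip : H -> H2 -> H1) : Prop :=
  forall (x : H) (y : H2) (z : H1), ip1 (pip x y) z = ip x (t z y).

Definition bounded_linear (V : lmodType C) (ip : V -> V -> C) (A : V -> V) : Prop :=
  (forall (a : C) (x y : V), A (a *: x + y) = a *: A x + A y) /\
  exists M : R, forall x : V, hnorm ip (A x) <= M * hnorm ip x.

Definition opnorm (V : lmodType C) (ip : V -> V -> C) (T : V -> V) : R :=
  sup [set r : R | exists x : V, hnorm ip x <= 1 /\ r = hnorm ip (T x)].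

Definition Ptilde (H1 H2 H : lmodType C) (t : H1 -> H2 -> H) (pip : H -> H2 -> H1)
    (n : nat) (y u : 'I_n -> H2) (x : H) : H :=
  \sum_(i < n) t (pip x (y i)) (u i).

Definition Pproj (H1 H2 H : lmodType C) (t : H1 -> H2 -> H) (pip : H -> H2 -> H1)
    (n : nat) (y u : 'I_n -> H2) (x : H) : H :=
  x - Ptilde t pip y u x.

Definition neumann_partial (V : lmodType C) (T : V -> V) (phi : V) (N : nat) : V :=
  \sum_(i < N) iter i T phi.

End Hilbert.

From HB Require Import structures.
From mathcomp Require Import all_boot all_order all_algebra.
From mathcomp Require Import complex.
From mathcomp Require Import classical_sets reals topology normedtype sequences.
From mathcomp Require Import ring lra.
Import Order.TTheory GRing.Theory Num.Theory.
Set Implicit Arguments. Unset Strict Implicit.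
Local Open Scope ring_scope.

(* Since <k_i, y_j>_2 = delta_ij, the equation P~_k S = 0 forces <S, y_j>_2' = 0 for all j,
   hence P~_u S = 0 and P_u S = S for every family u. So the sum S of the Neumann series of
   A P_k, a fixed point of x |-> phi + A P_k x, is also a fixed point of x |-> phi + A P_k' x.
   As A P_k' = A P_k - eps A P~_eta, the latter map contracts with constant
   ||A P_k|| + ||eps A P~_eta|| < 1, so its Neumann series converges to the same S. *)

Lemma Re_realM (R : realType) (s : R) (w : R[i]) :
  complex.Re ((s%:C)%C * w) = s * complex.Re w.
Proof. by case: w => a b /=; ring. Qed.

Lemma Re_conj (R : realType) (w : R[i]) : complex.Re w^* = complex.Re w.
Proof. by case: w. Qed.

(* [^*] is [Num.conj] here; [conjc_real] is stated for [conjc]. *)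
Lemma conj_real (R : realType) (s : R) : ((s%:C)%C)^* = (s%:C)%C :> R[i].
Proof. exact: conjc_real. Qed.

Section InnerProduct.
Variables (R : realType) (V : lmodType R[i]) (ip : V -> V -> R[i]).
Hypothesis ip_inner : inner_product ip.

Lemma ipDl x y z : ip (x + y) z = ip x z + ip y z.
Proof. by case: ip_inner => ipZD _ _ _; rewrite -[x]scale1r ipZD mul1r scale1r. Qed.

Lemma ip0l z : ip 0 z = 0.
Proof. by apply: (@addIr _ (ip 0 z)); rewrite -ipDl !add0r. Qed.

Lemma ipZl a x z : ip (a *: x) z = a * ip x z.
Proof. by case: ip_inner => ipZD _ _ _; rewrite -[a *: x]addr0 ipZD ip0l addr0. Qed.

Lemma ipNl x z : ip (- x) z = - ip x z.
Proof. by rewrite -scaleN1r ipZl mulN1r. Qed.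

Lemma ipBl x y z : ip (x - y) z = ip x z - ip y z.
Proof. by rewrite ipDl ipNl. Qed.

Lemma ip_suml I (r : seq I) (P : pred I) (f : I -> V) z :
  ip (\sum_(i <- r | P i) f i) z = \sum_(i <- r | P i) ip (f i) z.
Proof. by apply: (big_morph (ip^~ z)) => [x y|]; rewrite ?ipDl ?ip0l. Qed.

Lemma ipC x y : ip y x = (ip x y)^*.
Proof. by case: ip_inner. Qed.

Lemma ipDr x y z : ip z (x + y) = ip z x + ip z y.
Proof. by rewrite ipC ipDl rmorphD (ipC x z) (ipC y z). Qed.

Lemma ip0r z : ip z 0 = 0.
Proof. by rewrite ipC ip0l rmorph0. Qed.

Lemma ipZr a x z : ip z (a *: x) = a^* * ip z x.
Proof. by rewrite ipC ipZl rmorphM (ipC x z). Qed.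

Lemma ip_extl u v : (forall z, ip u z = ip v z) -> u = v.
Proof.
move=> eq_uv; apply/eqP; rewrite -subr_eq0; apply/eqP.
by case: ip_inner => _ _ _; apply; rewrite ipBl eq_uv subrr.
Qed.

Lemma ipxx_real x : ip x x = ((complex.Re (ip x x))%:C)%C.
Proof.
case: ip_inner => _ _ ipxx_ge0 _; move: (ipxx_ge0 x); rewrite lecE => /andP[/eqP Im0 _].
by case: (ip x x) Im0 => a b /= ->.
Qed.

Lemma Re_ipxx_ge0 x : 0 <= complex.Re (ip x x).
Proof. by case: ip_inner => _ _ ipxx_ge0 _; move: (ipxx_ge0 x); rewrite lecE => /andP[]. Qed.

Lemma Re_ipxx_scaleD (s : R) x y :
  complex.Re (ip ((s%:C)%C *: x + y) ((s%:C)%C *: x + y))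
  = s ^+ 2 * complex.Re (ip x x) + 2 * s * complex.Re (ip x y) + complex.Re (ip y y).
Proof.
rewrite ipDl !ipDr !ipZl !ipZr conj_real (ipC x y).
by case: (ip x x) (ip x y) (ip y y) => [a1 a2] [b1 b2] [c1 c2] /=; ring.
Qed.

Lemma hnorm_ge0 x : 0 <= hnorm ip x.
Proof. exact: sqrtr_ge0. Qed.

Lemma hnorm_sqr x : hnorm ip x ^+ 2 = complex.Re (ip x x).
Proof. by rewrite sqr_sqrtr // Re_ipxx_ge0. Qed.

Lemma hnorm0 : hnorm ip 0 = 0.
Proof. by rewrite /hnorm ip0l sqrtr0. Qed.

Lemma hnorm_eq0 x : hnorm ip x = 0 -> x = 0.
Proof.
move=> nx0; case: ip_inner => _ _ _; apply.
by rewrite ipxx_real -hnorm_sqr nx0 expr0n.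
Qed.

Lemma ip_cauchy_schwarz x y : complex.Re (ip x y) <= hnorm ip x * hnorm ip y.
Proof.
set b := complex.Re (ip x y).
have b2_le : b ^+ 2 <= complex.Re (ip x x) * complex.Re (ip y y).
  have [y0|y_neq0] := eqVneq y 0.
    by rewrite /b y0 ip0r expr0n /= mulr_ge0 // Re_ipxx_ge0.
  set qy := complex.Re (ip y y).
  have qy_gt0 : 0 < qy.
    rewrite lt_def Re_ipxx_ge0 andbT; apply: contra_neq y_neq0 => qy0.
    by apply: hnorm_eq0; rewrite /hnorm -/qy qy0 sqrtr0.
  (* expand 0 <= <s y + x, s y + x> at the minimising s = -b/<y,y> *)
  have := Re_ipxx_ge0 ((- b / qy)%:C%C *: y + x).
  rewrite Re_ipxx_scaleD (ipC x y) Re_conj -/b -/qy.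
  have -> : (- b / qy) ^+ 2 * qy + 2 * (- b / qy) * b + complex.Re (ip x x)
          = complex.Re (ip x x) - b ^+ 2 / qy by field; rewrite gt_eqF.
  by rewrite subr_ge0 ler_pdivrMr.
rewrite -!hnorm_sqr -exprMn in b2_le.
have : 0 <= hnorm ip x * hnorm ip y by rewrite mulr_ge0 ?hnorm_ge0.
move: b2_le; set p := hnorm ip x * hnorm ip y; nra.
Qed.

Lemma hnormD x y : hnorm ip (x + y) <= hnorm ip x + hnorm ip y.
Proof.
have sqr_le : hnorm ip (x + y) ^+ 2 <= (hnorm ip x + hnorm ip y) ^+ 2.
  rewrite hnorm_sqr -[x]scale1r Re_ipxx_scaleD scale1r -!hnorm_sqr.
  have := ip_cauchy_schwarz x y; nra.
have := hnorm_ge0 (x + y); have := hnorm_ge0 x; have := hnorm_ge0 y; nra.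
Qed.

Lemma hnormZ (s : R) x : hnorm ip ((s%:C)%C *: x) = `|s| * hnorm ip x.
Proof.
rewrite /hnorm ipZl ipZr conj_real !Re_realM mulrA -expr2.
by rewrite sqrtrM ?sqr_ge0 // sqrtr_sqr.
Qed.

Lemma hnormN x : hnorm ip (- x) = hnorm ip x.
Proof.
have -> : - x = ((-1)%:C)%C *: x by rewrite raddfN /= rmorph1 scaleN1r.
by rewrite hnormZ normrN normr1 mul1r.
Qed.

Lemma hnorm_distC x y : hnorm ip (x - y) = hnorm ip (y - x).
Proof. by rewrite -hnormN opprB. Qed.

Lemma hnorm_sum I (r : seq I) (P : pred I) (f : I -> V) :
  hnorm ip (\sum_(i <- r | P i) f i) <= \sum_(i <- r | P i) hnorm ip (f i).
Proof.
elim/big_rec2: _ => [|i a b _ IH]; first by rewrite hnorm0.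
by apply: le_trans (hnormD _ _) _; rewrite lerD2l.
Qed.

Lemma hnorm_small_eq0 z c : 0 <= c -> (forall d, 0 < d -> hnorm ip z <= c * d) -> z = 0.
Proof.
move=> c_ge0 small; apply: hnorm_eq0; apply/eqP; rewrite eq_le hnorm_ge0 andbT.
rewrite leNgt; apply/negP => z_gt0.
have := small (hnorm ip z / (c + 1)); rewrite divr_gt0 ?ltr_wpDl // => /(_ isT).
rewrite mulrA ler_pdivlMr ?ltr_wpDl //; nra.
Qed.

End InnerProduct.

Section BoundedOperator.
Variables (R : realType) (V : lmodType R[i]) (ip : V -> V -> R[i]).
Hypothesis ip_inner : inner_product ip.

Section OperatorNorm.
Variable T : V -> V.
Hypothesis T_bounded : bounded_linear ip T.

#[local] HB.instance Definition _ := GRing.isLinear.Build R[i] V V *:%R T T_bounded.1.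

Let opnorm_set :=
  [set r : R | exists x : V, hnorm ip x <= 1 /\ r = hnorm ip (T x)]%classic.

(* Boundedness of [T] matters: [sup] of a set with no upper bound is a junk value. *)
Let opnorm_set_ubound : has_ubound opnorm_set.
Proof.
case: T_bounded => _ [M T_le]; exists `|M| => _ [x [x_le1 ->]].
apply: le_trans (T_le x) _; apply: le_trans (_ : `|M| * hnorm ip x <= _).
  by apply: ler_wpM2r; [exact: hnorm_ge0 | exact: ler_norm].
by rewrite -[leRHS]mulr1 ler_wpM2l.
Qed.

Lemma opnorm_ge0 : 0 <= opnorm ip T.
Proof.
apply: (ub_le_sup opnorm_set_ubound); exists 0.
by rewrite linear0 hnorm0 ?ler01.
Qed.

Lemma hnorm_le_opnorm x : hnorm ip (T x) <= opnorm ip T * hnorm ip x.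
Proof.
have [x_eq0|x_neq0] := eqVneq (hnorm ip x) 0.
  by rewrite (hnorm_eq0 ip_inner x_eq0) linear0 hnorm0 // mulr0.
have x_gt0 : 0 < hnorm ip x by rewrite lt_def x_neq0 hnorm_ge0.
set u := ((hnorm ip x)^-1%:C)%C *: x.
have u_in : opnorm_set (hnorm ip (T u)).
  by exists u; rewrite hnormZ // ger0_norm ?invr_ge0 ?hnorm_ge0 // mulVf.
have := ub_le_sup opnorm_set_ubound u_in.
rewrite linearZ hnormZ // ger0_norm ?invr_ge0 ?hnorm_ge0 //.
by rewrite mulrC -ler_pdivrMr // mulrC.
Qed.

End OperatorNorm.

Lemma bounded_linear_comp S T : bounded_linear ip S -> bounded_linear ip T ->
  bounded_linear ip (fun x => S (T x)).
Proof.
move=> S_bounded T_bounded; split=> [a x y|]; first by rewrite T_bounded.1 S_bounded.1.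
exists (opnorm ip S * opnorm ip T) => x.
apply: le_trans (hnorm_le_opnorm S_bounded _) _; rewrite -mulrA.
by apply: ler_wpM2l; [exact: opnorm_ge0 | exact: hnorm_le_opnorm].
Qed.

Lemma bounded_linearZ (s : R) T : bounded_linear ip T ->
  bounded_linear ip (fun x => (s%:C)%C *: T x).
Proof.
move=> T_bounded; split=> [a x y|].
  by rewrite T_bounded.1 scalerDr !scalerA mulrC.
exists (`|s| * opnorm ip T) => x; rewrite hnormZ // -mulrA.
by apply: ler_wpM2l => //; exact: hnorm_le_opnorm.
Qed.

Lemma hnormB_le_opnormD S T x : bounded_linear ip S -> bounded_linear ip T ->
  hnorm ip (S x - T x) <= (opnorm ip S + opnorm ip T) * hnorm ip x.
Proof.
move=> S_bounded T_bounded; apply: le_trans (hnormD ip_inner _ _) _.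
by rewrite hnormN // mulrDl lerD // hnorm_le_opnorm.
Qed.

End BoundedOperator.

Lemma geometric_eventually_lt (R : realType) (q c e : R) : 0 <= q -> q < 1 -> 0 < e ->
  exists m0, forall m, (m0 <= m)%N -> q ^+ m * c < e.
Proof.
move=> q_ge0 q_lt1 e_gt0; have q_norm_lt1 : `|q| < 1 by rewrite ger0_norm.
have [m0 _ near_m0] :=
  (@cvgrPdist_lt R R^o _ _ _ (geometric c q) 0).1 (cvg_geometric c q_norm_lt1) e e_gt0.
exists m0 => m /near_m0 /=; rewrite sub0r normrN mulrC.
exact: le_lt_trans (ler_norm _).
Qed.

Section NeumannSeries.
Variables (R : realType) (V : lmodType R[i]) (ip : V -> V -> R[i]).
Hypothesis ip_inner : inner_product ip.
Variables (T : V -> V) (K : R).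
Hypothesis T_linear : linear T.
Hypotheses (K_ge0 : 0 <= K) (T_le : forall x, hnorm ip (T x) <= K * hnorm ip x).

#[local] HB.instance Definition _ := GRing.isLinear.Build R[i] V V *:%R T T_linear.

Lemma neumann_partialS phi m :
  neumann_partial T phi m.+1 = phi + T (neumann_partial T phi m).
Proof. by rewrite /neumann_partial big_ord_recl linear_sum. Qed.

Lemma neumann_limit_fixed phi S :
  hconverges_to ip (neumann_partial T phi) S -> S = phi + T S.
Proof.
move=> S_lim; apply/eqP; rewrite -subr_eq0; apply/eqP.
apply: (hnorm_small_eq0 ip_inner (_ : 0 <= 1 + K)) => [|d d_gt0].
  by rewrite addr_ge0.
have [m0 near_m0] := S_lim d d_gt0.
have -> : S - (phi + T S)
    = (S - neumann_partial T phi m0.+1) + T (neumann_partial T phi m0 - S).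
  by rewrite neumann_partialS linearB !opprD !addrA subrK.
apply: le_trans (hnormD ip_inner _ _) _; rewrite mulrDl mul1r lerD //.
  by rewrite hnorm_distC //; apply/ltW/near_m0.
by apply: le_trans (T_le _) _; rewrite ler_wpM2l //; apply/ltW/near_m0.
Qed.

Lemma neumann_remainder phi S : S = phi + T S ->
  forall m, S - neumann_partial T phi m = iter m T S.
Proof.
move=> S_fixed; elim=> [|m IH]; first by rewrite /neumann_partial big_ord0 subr0.
by rewrite neumann_partialS /= -IH linearB {1}S_fixed opprD addrACA subrr add0r.
Qed.

Lemma hnorm_iter_le x m : hnorm ip (iter m T x) <= K ^+ m * hnorm ip x.
Proof.
elim: m => [|m IH] /=; first by rewrite expr0 mul1r.
by apply: le_trans (T_le _) _; rewrite exprS -mulrA ler_wpM2l.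
Qed.

Lemma neumann_cvg_fixed phi S : K < 1 -> S = phi + T S ->
  hconverges_to ip (neumann_partial T phi) S.
Proof.
move=> K_lt1 S_fixed e e_gt0.
have [m0 small] := geometric_eventually_lt (hnorm ip S) K_ge0 K_lt1 e_gt0.
exists m0 => m m_ge; rewrite hnorm_distC // neumann_remainder //.
exact: le_lt_trans (hnorm_iter_le _ _) (small m m_ge).
Qed.

End NeumannSeries.

Section TensorProduct.
Variables (R : realType) (H1 H2 H : lmodType R[i]).
Variables (ip1 : H1 -> H1 -> R[i]) (ip2 : H2 -> H2 -> R[i]) (ip : H -> H -> R[i]).
Variables (t : H1 -> H2 -> H) (pip : H -> H2 -> H1).
Hypotheses (ip1_inner : inner_product ip1) (ip_inner : inner_product ip).
Hypothesis t_linearl : forall c a a' b, t (c *: a + a') b = c *: t a b + t a' b.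
Hypothesis t_linearr : forall c a b b', t a (c *: b + b') = c *: t a b + t a b'.
Hypothesis ip_tensor : forall a c b d, ip (t a b) (t c d) = ip1 a c * ip2 b d.
Hypothesis pip_adjoint : partial_inner ip1 ip t pip.

Lemma t0l b : t 0 b = 0.
Proof.
have := t_linearl 1 0 0 b; rewrite !scale1r !addr0 => t0D.
by apply: (@addrI _ (t 0 b)); rewrite addr0 -t0D.
Qed.

Lemma hnorm_tensor a b : hnorm ip (t a b) = hnorm ip1 a * hnorm ip2 b.
Proof.
rewrite /hnorm ip_tensor (ipxx_real ip1_inner a) Re_realM.
by rewrite sqrtrM // Re_ipxx_ge0.
Qed.

Lemma pip_linear a x x' b : pip (a *: x + x') b = a *: pip x b + pip x' b.
Proof.
apply: (ip_extl ip1_inner) => z.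
rewrite pip_adjoint (ipDl ip1_inner) (ipZl ip1_inner).
by rewrite (ipDl ip_inner) (ipZl ip_inner) !pip_adjoint.
Qed.

Lemma hnorm_pip_le x b : hnorm ip1 (pip x b) <= hnorm ip x * hnorm ip2 b.
Proof.
have sqr_le : hnorm ip1 (pip x b) ^+ 2 <= hnorm ip x * (hnorm ip1 (pip x b) * hnorm ip2 b).
  by rewrite (hnorm_sqr ip1_inner) pip_adjoint -hnorm_tensor ip_cauchy_schwarz.
have : 0 <= hnorm ip x * hnorm ip2 b by rewrite mulr_ge0 ?hnorm_ge0.
move: sqr_le; rewrite mulrCA; set p := hnorm ip x * hnorm ip2 b.
have := hnorm_ge0 ip1 (pip x b); nra.
Qed.

Variables (n : nat) (y : 'I_n -> H2).

Lemma Ptilde_linear u : linear (Ptilde t pip y u).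
Proof.
move=> a x x'; rewrite /Ptilde.
under eq_bigr do rewrite pip_linear t_linearl.
by rewrite big_split /= scaler_sumr.
Qed.

Lemma bounded_linear_Ptilde u : bounded_linear ip (Ptilde t pip y u).
Proof.
split; first exact: Ptilde_linear.
exists (\sum_(i < n) hnorm ip2 (y i) * hnorm ip2 (u i)) => x.
apply: le_trans (hnorm_sum ip_inner _ _ _) _; rewrite mulr_suml ler_sum // => i _.
rewrite hnorm_tensor mulrAC ler_wpM2r ?hnorm_ge0 //.
by rewrite mulrC hnorm_pip_le.
Qed.

Lemma bounded_linear_Pproj u : bounded_linear ip (Pproj t pip y u).
Proof.
have [Pt_linear [M Pt_le]] := bounded_linear_Ptilde u.
split=> [a x x'|]; first by rewrite /Pproj Pt_linear scalerBr opprD addrACA.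
exists (1 + M) => x; apply: le_trans (hnormD ip_inner _ _) _.
by rewrite hnormN // mulrDl mul1r lerD2l.
Qed.

Lemma Ptilde_addr (u v : 'I_n -> H2) a x :
  Ptilde t pip y (fun i => u i + a *: v i) x
  = Ptilde t pip y u x + a *: Ptilde t pip y v x.
Proof.
rewrite /Ptilde scaler_sumr -big_split /=.
by apply: eq_bigr => i _; rewrite [u i + _]addrC t_linearr addrC.
Qed.

Lemma Ptilde_eq0_biorthogonal (k u : 'I_n -> H2) x :
  (forall i j, ip2 (k i) (y j) = (i == j)%:R) ->
  Ptilde t pip y k x = 0 -> Ptilde t pip y u x = 0.
Proof.
move=> biorth Pkx0.
have pip0 j : pip x (y j) = 0.
  apply: (ip_extl ip1_inner) => z; rewrite (ip0l ip1_inner) pip_adjoint.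
  have : ip (Ptilde t pip y k x) (t z (y j)) = 0 by rewrite Pkx0 (ip0l ip_inner).
  rewrite /Ptilde (ip_suml ip_inner) (bigD1 j) //= big1 ?addr0.
    by rewrite ip_tensor biorth eqxx mulr1 pip_adjoint.
  by move=> i /negbTE ij; rewrite ip_tensor biorth ij mulr0.
by rewrite /Ptilde big1 // => i _; rewrite pip0 t0l.
Qed.

Section Perturbation.
Variable A : H -> H.
Hypothesis A_bounded : bounded_linear ip A.
Variables (k eta : 'I_n -> H2) (s : R).
Hypothesis biorth : forall i j, ip2 (k i) (y j) = (i == j)%:R.

#[local] HB.instance Definition _ := GRing.isLinear.Build R[i] H H *:%R A A_bounded.1.

Let k' i := k i + (s%:C)%C *: eta i.
Let APk x := A (Pproj t pip y k x).
Let APk' x := A (Pproj t pip y k' x).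
Let APeta x := (s%:C)%C *: A (Ptilde t pip y eta x).

Let APk'E x : APk' x = APk x - APeta x.
Proof. by rewrite /APk' /Pproj Ptilde_addr opprD addrA linearB linearZ. Qed.

Lemma neumann_perturbation phi S :
  opnorm ip APk + opnorm ip APeta < 1 ->
  hconverges_to ip (neumann_partial APk phi) S -> Ptilde t pip y k S = 0 ->
  hconverges_to ip (neumann_partial APk' phi) S /\ Ptilde t pip y k' S = 0.
Proof.
move=> q_lt1 S_lim PkS0.
have APk_bounded : bounded_linear ip APk.
  exact: (bounded_linear_comp ip_inner A_bounded (bounded_linear_Pproj k)).
have APeta_bounded : bounded_linear ip APeta.
  exact: (bounded_linearZ ip_inner s
    (bounded_linear_comp ip_inner A_bounded (bounded_linear_Ptilde eta))).
have PS0 u := Ptilde_eq0_biorthogonal u biorth PkS0.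
have S_fixed : S = phi + APk S.
  exact: (neumann_limit_fixed ip_inner APk_bounded.1 (opnorm_ge0 ip_inner APk_bounded)
    (hnorm_le_opnorm ip_inner APk_bounded) S_lim).
split; last exact: PS0.
apply: (neumann_cvg_fixed ip_inner _ _ _ q_lt1).
- exact: (bounded_linear_comp ip_inner A_bounded (bounded_linear_Pproj k')).1.
- by rewrite addr_ge0 ?(opnorm_ge0 ip_inner).
- by move=> x; rewrite APk'E; exact: hnormB_le_opnormD.
- suff -> : APk' S = APk S by [].
  by rewrite /APk' /APk /Pproj !PS0.
Qed.

End Perturbation.
End TensorProduct.

Theorem theorem3 (R : realType) (H1 H2 H : lmodType R[i])
    (ip1 : H1 -> H1 -> R[i]) (ip2 : H2 -> H2 -> R[i]) (ip : H -> H -> R[i])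
    (t : H1 -> H2 -> H) (pip : H -> H2 -> H1)
    (A : H -> H) (phi : H) (n : nat) (y k eta : 'I_n -> H2) (eps : R) :
  hilbert ip1 -> separable ip1 -> hilbert ip2 ->
  hilbert_tensor ip1 ip2 ip t ->
  partial_inner ip1 ip t pip ->
  bounded_linear ip A ->
  (forall i j : 'I_n, ip2 (y i) (y j) = (i == j)%:R) ->
  (forall c : 'I_n -> R[i], \sum_(i < n) c i *: k i = 0 -> forall i, c i = 0) ->
  (forall i j : 'I_n, ip2 (k i) (y j) = (i == j)%:R) ->
  (forall i : 'I_n, hnorm ip2 (eta i) = 1) ->
  (forall i j : 'I_n, ip2 (eta i) (y j) = 0) ->
  let k' := fun i : 'I_n => k i + (eps%:C)%C *: eta i in
  opnorm ip (fun x => A (Pproj t pip y k x))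
    + opnorm ip (fun x => (eps%:C)%C *: A (Ptilde t pip y eta x)) < 1 ->
  (exists S : H, hconverges_to ip (neumann_partial (fun x => A (Pproj t pip y k x)) phi) S
                 /\ Ptilde t pip y k S = 0) ->
  exists S' : H, hconverges_to ip (neumann_partial (fun x => A (Pproj t pip y k' x)) phi) S'
                 /\ Ptilde t pip y k' S' = 0.
Proof.
move=> [ip1_inner _] _ _ [[ip_inner _] t_linearl t_linearr ip_tensor _].
move=> pip_adjoint A_bounded _ _ biorth _ _ k' q_lt1 [S [S_lim PkS0]].
exists S; exact: (neumann_perturbation ip1_inner ip_inner t_linearl t_linearr
  ip_tensor pip_adjoint A_bounded biorth q_lt1 S_lim PkS0).
Qed.
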